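(* Assume (A1) and (A2) below. Then for any policy $\pi$ and any $s\in\mathcal S$, $u_t(s)=w_t(s)-g_t(s)$, where $$u_t(s)=\mathbb{V}_{a,s'\sim\pi,\bar p_t}\big[\bar V_t^\pi(s')\big]-\mathbb{E}_{p\sim\Phi_t}\Big[\mathbb{V}_{a,s'\sim\pi,p}\big[V^{\pi,p}(s')\big]\Big],$$ $$w_t(s)=\mathbb{V}_{p\sim\Phi_t}\Big[\sum_{a,s'}\pi(a\mid s)p(s'\mid s,a)\bar V^\pi_t(s')\Big],$$ $$g_t(s)=\mathbb{E}_{p\sim\Phi_t}\Big[\mathbb{V}_{a,s'\sim\pi,p}\big[V^{\pi,p}(s')\big]-\mathbb{V}_{a,s'\sim\pi,p}\big[\bar V^\pi_t(s')\big]\Big].$$ Furthermore, $g_t(s)\ge 0$, and hence $u_t(s)\le w_t(s)$.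
   Context: Let $\mathcal S$ be a finite state space, $\mathcal A$ a finite action space, $r:\mathcal S\times\mathcal A\to\mathbb R$ a known bounded (deterministic) reward function and $\gamma\in[0,1)$ a discount factor. A transition function $p$ assigns to each $(s,a)$ a probability distribution $p(\cdot\mid s,a)$ on $\mathcal S$. A policy $\pi$ gives distributions $\pi(\cdot\mid s)$ on $\mathcal A$. For a transition function $p$, the value function is $V^{\pi,p}(s)=\mathbb E\big[\sum_{h\ge 0}\gamma^h r(s_h,a_h)\mid s_0=s\big]$ with $a_h\sim\pi(\cdot\mid s_h)$, $s_{h+1}\sim p(\cdot\mid s_h,a_h)$. The transition function $p$ is a random variable with (posterior) distribution $\Phi_t$. Define $\bar p_t(s'\mid s,a)=\mathbb E_{p\sim\Phi_t}[p(s'\mid s,a)]$ and $\bar V^\pi_t(s)=\mathbb E_{p\sim\Phi_t}[V^{\pi,p}(s)]$. For a transition function $q$ and a function $f$ on $\mathcal S$, $\mathbb V_{a,s'\sim\pi,q}[f(s')]$ denotes the variance of $f(s')$ when $a\sim\pi(\cdot\mid s)$ and $s'\sim q(\cdot\mid s,a)$. Assumptions: (A1) (independent transitions) $p(s'\mid x,a)$ and $p(s'\mid y,a)$ are independent random variables if $x\neq y$; (A2) (acyclic MDP) the MDP is a directed acyclic graph, i.e., states are not visited more than once in any given episode. *)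

From HB Require Import structures.
From mathcomp Require Import all_boot all_order all_algebra.
From mathcomp Require Import all_classical all_reals all_analysis.
Set Implicit Arguments. Unset Strict Implicit. Unset Printing Implicit Defensive.
Import Order.TTheory GRing.Theory Num.Theory.
Local Open Scope ring_scope.
Local Open Scope classical_set_scope.

Section MDP.
Variables (R : realType) (S A : finType).

Definition is_transition (q : S -> A -> S -> R) : Prop :=
  forall s a, (forall s', 0 <= q s a s') /\ \sum_(s' : S) q s a s' = 1.

Definition is_policy (pi : S -> A -> R) : Prop :=
  forall s, (forall a, 0 <= pi s a) /\ \sum_(a : A) pi s a = 1.

(* Distribution of s_h given s_0 = s, for the chain a_h ~ pi(.|s_h),
   s_{h+1} ~ q(.|s_h,a_h):  state_dist pi q h s x = P(s_h = x | s_0 = s). *)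
Fixpoint state_dist (pi : S -> A -> R) (q : S -> A -> S -> R) (h : nat)
    (s : S) (x : S) : R :=
  match h with
  | 0 => (x == s)%:R
  | h'.+1 => \sum_(y : S) state_dist pi q h' s y *
               \sum_(a : A) pi y a * q y a x
  end.

(* V^{pi,q}(s) = E[ sum_{h>=0} gamma^h r(s_h,a_h) | s_0 = s ]
   = sum_{h>=0} gamma^h E[r(s_h,a_h)]  (limit of partial sums). *)
Definition value (r : S -> A -> R) (gamma : R) (pi : S -> A -> R)
    (q : S -> A -> S -> R) (s : S) : R :=
  limn (fun n => \sum_(0 <= h < n)
    gamma ^+ h * \sum_(x : S) state_dist pi q h s x *
                   \sum_(a : A) pi x a * r x a).

Definition next_mean (pi : S -> A -> R) (q : S -> A -> S -> R) (s : S)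
    (f : S -> R) : R :=
  \sum_(a : A) \sum_(s' : S) pi s a * q s a s' * f s'.

Definition next_var (pi : S -> A -> R) (q : S -> A -> S -> R) (s : S)
    (f : S -> R) : R :=
  \sum_(a : A) \sum_(s' : S)
     pi s a * q s a s' * (f s' - next_mean pi q s f) ^+ 2.

End MDP.

Section Random.
Context {d : measure_display} {Omega : measurableType d} {R : realType}
        {S A : finType}.

(* (A1) independent transitions: the random transition rows
   p(.|x,.) , x in S, are mutually independent, i.e. the product rule
   holds for every family of "rectangle" events
   {w | forall a s', p w x a s' \in B x a s'} (taking B x := setT drops x). *)
Definition independent_transitions (P : probability Omega R)
    (p : Omega -> S -> A -> S -> R) : Prop :=
  forall B : S -> A -> S -> set R,
    (forall x a s', measurable (B x a s')) ->
    P (\bigcap_(x in [set: S]) [set w | forall a s', B x a s' (p w x a s')])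
    = (\prod_(x : S) P [set w | forall a s', B x a s' (p w x a s')])%E.

(* (A2) acyclic MDP: there is a topological order rho of the states such that
   every possible transition goes strictly up in rho, except at terminal
   states, which are absorbing (the episode has ended). *)
Definition acyclic_mdp (p : Omega -> S -> A -> S -> R) : Prop :=
  exists (term : pred S) (rho : S -> nat),
    forall w s a s',
      (term s -> p w s a s = 1) /\
      (~~ term s -> p w s a s' != 0 -> (rho s < rho s')%N).

End Random.

Definition mean_transition {d : measure_display} {Omega : measurableType d}
    {R : realType} {S A : finType} (P : probability Omega R)
    (p : Omega -> S -> A -> S -> R) : S -> A -> S -> R :=
  fun s a s' => fine ('E_P[fun w => p w s a s'])%E.

Definition mean_value {d : measure_display} {Omega : measurableType d}
    {R : realType} {S A : finType} (P : probability Omega R)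
    (p : Omega -> S -> A -> S -> R) (r : S -> A -> R) (gamma : R)
    (pi : S -> A -> R) : S -> R :=
  fun s => fine ('E_P[fun w => value r gamma pi (p w) s])%E.

From HB Require Import structures.
From mathcomp Require Import all_boot all_order all_algebra.
From mathcomp Require Import all_classical all_reals all_analysis.
From mathcomp Require Import measurable_realfun.
From mathcomp Require Import ring lra.
Import Order.TTheory GRing.Theory Num.Theory.
Import numFieldNormedType.Exports.
Set Implicit Arguments. Unset Strict Implicit. Unset Printing Implicit Defensive.
Local Open Scope ring_scope.
Local Open Scope classical_set_scope.

(* Let Q be the distribution of the next state from s under pi and p; its
   posterior mean is the next-state distribution under pbar. The identity
   u = w - g is then the law of total variance:
   Var_{pbar}(Vbar) = Var_p(E_Q[Vbar]) + E_p[Var_Q(Vbar)].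
   For g >= 0, write V^{pi,p} = Vbar + D. Pointwise in p,
   Var_Q(V) - Var_Q(Vbar) = Var_Q(D) + 2 Cov_Q(Vbar, D), and the covariance has
   posterior mean zero: Q is a function of the row p(.|s,.), while for every
   state s' that Q can reach, acyclicity makes V^{pi,p}(s') a function of the
   other rows only; these are independent by (A1), and E[D(s')] = 0.
   The product rule E[XY] = E[X] E[Y] for bounded functions of independent
   rows follows from the pi-lambda theorem and a step-function approximation. *)

Section bounded_expectation.
Context d (T : measurableType d) (R : realType) (P : probability T R).
Implicit Types (f g : T -> R) (k : R).

Definition bounded_mfun f :=
  measurable_fun setT f /\ exists M, forall x, `|f x| <= M.

(* Junk value 0 when ['E_P[f]] is infinite; only used for bounded [f]. *)
Definition expectR f : R := fine ('E_P[f])%E.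

Lemma bounded_mfun_Lfun1 f : bounded_mfun f -> f \in Lfun P 1.
Proof.
move=> [mf [M fM]]; apply/Lfun1_integrable.
apply: measurable_bounded_integrable => //.
  by rewrite (le_lt_trans (probability_le1 P measurableT)) // ltry.
exists M; split; first exact: num_real.
by move=> y My x _; apply: le_trans (fM x) (ltW My).
Qed.

Lemma expectRE f : bounded_mfun f -> ('E_P[f] = (expectR f)%:E)%E.
Proof.
by move=> /bounded_mfun_Lfun1 f1; rewrite /expectR fineK // expectation_fin_num.
Qed.

Lemma bounded_mfun_cst k : bounded_mfun (fun _ => k).
Proof. by split; [exact: measurable_cst | exists `|k|]. Qed.

Lemma bounded_mfunD f g :
  bounded_mfun f -> bounded_mfun g -> bounded_mfun (fun x => f x + g x).
Proof.
move=> [mf [M fM]] [mg [N gN]]; split; first exact: measurable_funD.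
by exists (M + N) => x; apply: le_trans (ler_normD _ _) (lerD (fM x) (gN x)).
Qed.

Lemma bounded_mfunM f g :
  bounded_mfun f -> bounded_mfun g -> bounded_mfun (fun x => f x * g x).
Proof.
move=> [mf [M fM]] [mg [N gN]]; split; first exact: measurable_funM.
by exists (M * N) => x; rewrite normrM ler_pM.
Qed.

Lemma bounded_mfun_sqr f : bounded_mfun f -> bounded_mfun (fun x => f x ^+ 2).
Proof. by move=> bf; under eq_fun do rewrite expr2; exact: bounded_mfunM. Qed.

Lemma bounded_mfunB f g :
  bounded_mfun f -> bounded_mfun g -> bounded_mfun (fun x => f x - g x).
Proof.
move=> bf [mg [N gN]]; apply: bounded_mfunD => //; split.
  exact: measurableT_comp.
by exists N => x; rewrite normrN.
Qed.

Lemma bounded_mfun_sum (I : Type) (s : seq I) (F : I -> T -> R) :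
  (forall i, bounded_mfun (F i)) -> bounded_mfun (fun x => \sum_(i <- s) F i x).
Proof.
move=> bF; elim: s => [|i s IH].
  by under [X in bounded_mfun X]funext do rewrite big_nil; exact: bounded_mfun_cst.
by under [X in bounded_mfun X]funext do rewrite big_cons; exact: bounded_mfunD.
Qed.

Lemma bounded_mfun_indic (E : set T) : measurable E -> bounded_mfun (\1_E).
Proof.
move=> mE; split; first exact: measurable_indic.
by exists 1 => x; rewrite indicE; case: (x \in E); rewrite ?normr1 ?normr0.
Qed.

Lemma expectR_cst k : expectR (fun _ => k) = k.
Proof. by rewrite /expectR expectation_cst. Qed.

Lemma expectRD f g : bounded_mfun f -> bounded_mfun g ->
  expectR (fun x => f x + g x) = expectR f + expectR g.
Proof.
move=> /bounded_mfun_Lfun1 f1 /bounded_mfun_Lfun1 g1.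
rewrite /expectR (_ : (fun x => _) = f \+ g) // expectationD //.
by rewrite fineD // expectation_fin_num.
Qed.

Lemma expectRZ k f : bounded_mfun f -> expectR (fun x => k * f x) = k * expectR f.
Proof.
move=> bf; rewrite {1}/expectR (_ : (fun x => _) = k \o* f); last first.
  by apply: funext => x /=; rewrite mulrC.
by rewrite expectationZl ?bounded_mfun_Lfun1 // expectRE.
Qed.

Lemma expectRB f g : bounded_mfun f -> bounded_mfun g ->
  expectR (fun x => f x - g x) = expectR f - expectR g.
Proof.
move=> bf bg; under eq_fun do rewrite -mulN1r.
by rewrite expectRD ?expectRZ ?mulN1r //; apply: (bounded_mfunM (bounded_mfun_cst _)).
Qed.

Lemma expectR_sum (I : Type) (s : seq I) (F : I -> T -> R) :
  (forall i, bounded_mfun (F i)) ->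
  expectR (fun x => \sum_(i <- s) F i x) = \sum_(i <- s) expectR (F i).
Proof.
move=> bF; elim: s => [|i s IH].
  by under eq_fun do rewrite big_nil; rewrite big_nil expectR_cst.
under eq_fun do rewrite big_cons.
by rewrite big_cons expectRD ?IH //; exact: bounded_mfun_sum.
Qed.

Lemma expectR_affine a b f : bounded_mfun f ->
  expectR (fun x => a * f x + b) = a * expectR f + b.
Proof.
move=> bf; rewrite expectRD ?expectRZ ?expectR_cst //.
  exact: bounded_mfunM (bounded_mfun_cst _) bf.
exact: bounded_mfun_cst.
Qed.

Lemma expectRM_affinel a b f g : bounded_mfun f -> bounded_mfun g ->
  expectR (fun x => f x * g x) = expectR f * expectR g ->
  expectR (fun x => (a * f x + b) * g x) =
  expectR (fun x => a * f x + b) * expectR g.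
Proof.
move=> bf bg fg; rewrite expectR_affine //.
under eq_fun do rewrite mulrDl -mulrA.
rewrite expectRD ?expectRZ ?fg ?expectRZ //; first by rewrite mulrDl mulrA.
- exact: bounded_mfunM.
- exact: bounded_mfunM (bounded_mfun_cst _) (bounded_mfunM bf bg).
- exact: bounded_mfunM (bounded_mfun_cst _) bg.
Qed.

Lemma varianceRE f : bounded_mfun f ->
  'V_P[f] = (expectR (fun x => f x * f x) - expectR f ^+ 2)%:E.
Proof.
move=> bf; have bff := bounded_mfunM bf bf.
rewrite /variance covarianceE ?bounded_mfun_Lfun1 //.
by rewrite !expectRE // -EFinM -EFinB expr2.
Qed.

Lemma expectR_ge0 f : (forall x, 0 <= f x) -> 0 <= expectR f.
Proof. by move=> f0; rewrite /expectR fine_ge0 // expectation_ge0. Qed.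

Lemma expectR_le f g : bounded_mfun f -> bounded_mfun g ->
  (forall x, f x <= g x) -> expectR f <= expectR g.
Proof.
move=> bf bg fg; rewrite -subr_ge0 -expectRB //.
by apply: expectR_ge0 => x; rewrite subr_ge0.
Qed.

Lemma expectR_indic (E : set T) : measurable E -> expectR (\1_E) = fine (P E).
Proof. by move=> mE; rewrite /expectR expectation_indic. Qed.

End bounded_expectation.

Section independence.
Context d (T : measurableType d) (R : realType) (P : probability T R).
Local Open Scope ereal_scope.

Lemma lambda_system_indep (E : set T) : measurable E ->
  lambda_system setT [set F | measurable F /\ P (E `&` F) = P E * P F].
Proof.
move=> mE; have PD X Y : measurable X -> measurable Y ->
    P (X `\` Y) = P X - P (X `&` Y).
  move=> mX mY; apply: measureD => //.
  by rewrite (le_lt_trans (probability_le1 P mX)) // ltry.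
split => //.
- by split; [exact: measurableT | rewrite setIT probability_setT mule1].
- move=> A B BA [mA EA] [mB EB]; split; first exact: measurableD.
  have mEA := measurableI _ _ mE mA.
  rewrite setIDA !PD // -setIA !(setIidr BA) EA EB muleBr //.
    exact: fin_num_measure.
  by rewrite fin_num_adde_defl // fin_numN fin_num_measure.
- move=> F ndF GF; have mF n : measurable (F n) by case: (GF n).
  have mEF n : measurable (E `&` F n) by apply: measurableI.
  have mUF : measurable (\bigcup_n F n) by exact: bigcup_measurable.
  split => //.
  have ndEF : nondecreasing_seq (fun n => E `&` F n).
    move=> m n mn /=; apply/subsetPset; apply: setIS; apply/subsetPset; exact: ndF.
  have cvgEF := nondecreasing_cvg_mu (mu := P) mEF
    (bigcup_measurable (fun n _ => mEF n)) ndEF.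
  have cvgF := cvgeZl (fin_num_measure P _ mE)
    (nondecreasing_cvg_mu (mu := P) mF mUF ndF).
  have EF : P \o (fun n => E `&` F n) = (fun n => P E * (P \o F) n).
    by apply: funext => n /=; case: (GF n).
  rewrite EF in cvgEF; rewrite setI_bigcupr.
  exact: cvg_unique cvgEF cvgF.
Qed.

Lemma g_sigma_measurable (G : set (set T)) :
  G `<=` measurable -> <<s G >> `<=` measurable.
Proof. by move=> Gm; apply: smallest_sub => //; exact: sigma_algebra_measurable. Qed.

Lemma g_sigma_measurable_fun (G : set (set T)) (f : T -> R) :
  G `<=` measurable ->
  @measurable_fun _ _ (g_sigma_algebraType G) R setT f -> measurable_fun setT f.
Proof. by move=> Gm mf _ B mB; apply: (g_sigma_measurable Gm); exact: mf. Qed.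

Lemma g_sigma_preimage (G : set (set T)) (f : T -> R) B :
  @measurable_fun _ _ (g_sigma_algebraType G) R setT f -> measurable B ->
  <<s G >> (f @^-1` B).
Proof. by move=> mf mB; rewrite -[f @^-1` B]setTI; exact: mf. Qed.

Lemma g_sigma_indep (G1 G2 : set (set T)) :
  setI_closed G1 -> setI_closed G2 -> G1 `<=` measurable -> G2 `<=` measurable ->
  (forall E F, G1 E -> G2 F -> P (E `&` F) = P E * P F) ->
  forall E F, <<s G1 >> E -> <<s G2 >> F -> P (E `&` F) = P E * P F.
Proof.
move=> G1I G2I G1m G2m G12 E F sE sF.
have G1_indep E' : G1 E' -> P (E' `&` F) = P E' * P F.
  move=> G1E'; have := lambda_system_subset G2I (lambda_system_indep (G1m _ G1E')).
  by move=> /(_ _ _ F sF) [] // F' G2F'; split; [exact: G2m | exact: G12].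
suff [_] : [set E' | measurable E' /\ P (F `&` E') = P F * P E'] E.
  by rewrite setIC muleC.
have mF := g_sigma_measurable G2m sF.
apply: (lambda_system_subset G1I (lambda_system_indep mF)) => // E' G1E'.
by split; [exact: G1m | rewrite setIC muleC; exact: G1_indep].
Qed.

End independence.

Lemma eq0_le_divS (R : archiFieldType) (a c : R) :
  (forall n : nat, `|a| <= c / n.+1%:R) -> a = 0.
Proof.
move=> small; apply/eqP; apply: contraT => a0; rewrite -normr_gt0 in a0.
have := small (Num.truncn (c / `|a|)).
rewrite ler_pdivlMr ?ltr0Sn // mulrC -ler_pdivlMr // leNgt.
by rewrite truncnS_gt.
Qed.

Lemma mulr_approx (R : realFieldType) (x y x' y' e : R) :
  0 <= x' <= x -> x <= 1 -> 0 <= y' <= y -> y <= 1 ->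
  x - e <= x' -> y - e <= y' ->
  x * y - 2 * e <= x' * y' <= x * y.
Proof.
move=> /andP[x'0 x'x] x1 /andP[y'0 y'y] y1 xx' yy'.
rewrite ler_pM // andbT.
have ex : 0 <= e - (x - x') by lra.
have ey : 0 <= e - (y - y') by lra.
have := mulr_ge0 (le_trans x'0 x'x) ey; have := mulr_ge0 y'0 ex; nra.
Qed.

Section grid_approximation.
Context d (T : measurableType d) (R : realType) (P : probability T R).
Implicit Types (Z : T -> R) (n k : nat).

Definition grid_cell Z n k : set T :=
  Z @^-1` `[k%:R / n.+1%:R, k.+1%:R / n.+1%:R[.

Definition grid_approx Z n (w : T) : R :=
  \sum_(k < n.+2) k%:R / n.+1%:R * \1_(grid_cell Z n k) w.

Lemma grid_cellP Z n k w : 0 <= Z w ->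
  grid_cell Z n k w <-> Num.truncn (n.+1%:R * Z w) = k.
Proof.
move=> Z0; rewrite /grid_cell /= in_itv /=.
rewrite ler_pdivrMr ?ltr0Sn // ltr_pdivlMr ?ltr0Sn // ![Z w * _]mulrC.
by rewrite -truncn_eq ?mulr_ge0 //; split => /eqP.
Qed.

Lemma grid_approxE Z n w : 0 <= Z w <= 1 ->
  grid_approx Z n w = (Num.truncn (n.+1%:R * Z w))%:R / n.+1%:R.
Proof.
move=> /andP[Z0 Z1]; set t := Num.truncn _.
have tn : (t < n.+2)%N.
  rewrite /t truncn_lt_nat ?mulr_ge0 //.
  have nZ : n.+1%:R * Z w <= n.+1%:R by rewrite ler_piMr.
  by rewrite (le_lt_trans nZ) // ltr_nat.
rewrite /grid_approx (bigD1 (Ordinal tn)) //= big1 ?addr0.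
  by rewrite indicE mem_set ?mulr1 //; apply/grid_cellP.
move=> k /eqP kt; rewrite indicE memNset ?mulr0 // => /grid_cellP tk.
by apply: kt; apply: val_inj; rewrite /= /t tk.
Qed.

Lemma grid_approx_bounds Z n w : 0 <= Z w <= 1 ->
  0 <= grid_approx Z n w <= Z w /\ Z w - n.+1%:R^-1 <= grid_approx Z n w.
Proof.
move=> Z01; have /andP[Z0 _] := Z01; rewrite grid_approxE //.
have /andP[tZ Zt] := truncn_itv (mulr_ge0 (ler0n _ n.+1) Z0).
have n0 : 0 < n.+1%:R :> R by rewrite ltr0Sn.
split; first by rewrite divr_ge0 //= ler_pdivrMr // [Z w * _]mulrC.
rewrite ler_pdivlMr // mulrBl mulVf ?gt_eqF // [Z w * _]mulrC.
by rewrite lerBlDr natr1 ltW.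
Qed.

Lemma measurable_grid_cell Z n k :
  measurable_fun setT Z -> measurable (grid_cell Z n k).
Proof. by move=> mZ; rewrite -[grid_cell _ _ _]setTI; exact: mZ. Qed.

Lemma bounded_mfun_grid_approx Z n :
  measurable_fun setT Z -> bounded_mfun (grid_approx Z n).
Proof.
move=> mZ; apply: bounded_mfun_sum => k; apply: bounded_mfunM.
  exact: bounded_mfun_cst.
exact/bounded_mfun_indic/measurable_grid_cell.
Qed.

Lemma bounded_mfun01 Z :
  measurable_fun setT Z -> (forall w, 0 <= Z w <= 1) -> bounded_mfun Z.
Proof.
move=> mZ Z01; split => //; exists 1 => w.
by have /andP[Z0 Z1] := Z01 w; rewrite ger0_norm.
Qed.

Lemma expectR_grid_approx Z n : measurable_fun setT Z ->
  expectR P (grid_approx Z n) =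
  \sum_(k < n.+2) k%:R / n.+1%:R * fine (P (grid_cell Z n k)).
Proof.
move=> mZ; have mcell k := measurable_grid_cell n k mZ.
rewrite expectR_sum => [|k]; last first.
  exact/(bounded_mfunM (bounded_mfun_cst _ _))/bounded_mfun_indic.
apply: eq_bigr => k _.
by rewrite expectRZ ?expectR_indic //; exact: bounded_mfun_indic.
Qed.

Lemma expectR01 Z : measurable_fun setT Z -> (forall w, 0 <= Z w <= 1) ->
  0 <= expectR P Z <= 1.
Proof.
move=> mZ Z01; rewrite expectR_ge0 => [|w]; last by case/andP: (Z01 w).
rewrite -(expectR_cst P 1) expectR_le //; first exact: bounded_mfun01.
  exact: bounded_mfun_cst.
by move=> w; case/andP: (Z01 w).
Qed.

Lemma expectR_grid_approx_bounds Z n :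
  measurable_fun setT Z -> (forall w, 0 <= Z w <= 1) ->
  0 <= expectR P (grid_approx Z n) <= expectR P Z /\
  expectR P Z - n.+1%:R^-1 <= expectR P (grid_approx Z n).
Proof.
move=> mZ Z01; have bZ := bounded_mfun01 mZ Z01.
have bZn := bounded_mfun_grid_approx n mZ.
split.
  rewrite expectR_ge0 => [|w]; last by case: (grid_approx_bounds n (Z01 w)) => /andP[].
  by apply: expectR_le => // w; case: (grid_approx_bounds n (Z01 w)) => /andP[].
rewrite -[X in _ - X](expectR_cst P) -expectRB //; last exact: bounded_mfun_cst.
apply: expectR_le => //; first by apply: bounded_mfunB => //; exact: bounded_mfun_cst.
by move=> w; case: (grid_approx_bounds n (Z01 w)).
Qed.

Lemma expectR_grid_approxM_bounds (X Y : T -> R) n :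
  measurable_fun setT X -> measurable_fun setT Y ->
  (forall w, 0 <= X w <= 1) -> (forall w, 0 <= Y w <= 1) ->
  expectR P (fun w => X w * Y w) - 2 * n.+1%:R^-1 <=
    expectR P (fun w => grid_approx X n w * grid_approx Y n w) <=
  expectR P (fun w => X w * Y w).
Proof.
move=> mX mY X01 Y01.
have bXY := bounded_mfunM (bounded_mfun01 mX X01) (bounded_mfun01 mY Y01).
have bXYn := bounded_mfunM (bounded_mfun_grid_approx n mX)
  (bounded_mfun_grid_approx n mY).
have XYn_bounds w : X w * Y w - 2 * n.+1%:R^-1 <=
    grid_approx X n w * grid_approx Y n w <= X w * Y w.
  have [Xn_bounds XXn] := grid_approx_bounds n (X01 w).
  have [Yn_bounds YYn] := grid_approx_bounds n (Y01 w).
  by apply: mulr_approx => //; [case/andP: (X01 w) | case/andP: (Y01 w)].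
apply/andP; split; last by apply: expectR_le => // w; case/andP: (XYn_bounds w).
rewrite -[X in _ - X](expectR_cst P) -expectRB //; last exact: bounded_mfun_cst.
apply: expectR_le => //; first by apply: bounded_mfunB => //; exact: bounded_mfun_cst.
by move=> w; case/andP: (XYn_bounds w).
Qed.

Lemma expectR_grid_approxM (X Y : T -> R) n :
  measurable_fun setT X -> measurable_fun setT Y ->
  (forall k l, P (grid_cell X n k `&` grid_cell Y n l) =
               (P (grid_cell X n k) * P (grid_cell Y n l))%E) ->
  expectR P (fun w => grid_approx X n w * grid_approx Y n w) =
  expectR P (grid_approx X n) * expectR P (grid_approx Y n).
Proof.
move=> mX mY XY; rewrite !expectR_grid_approx // mulr_suml.
have mXY k l : measurable (grid_cell X n k `&` grid_cell Y n l).
  by apply: measurableI; exact: measurable_grid_cell.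
have -> : (fun w => grid_approx X n w * grid_approx Y n w) = (fun w =>
    \sum_(k < n.+2) \sum_(l < n.+2) (k%:R / n.+1%:R) * (l%:R / n.+1%:R) *
      \1_(grid_cell X n k `&` grid_cell Y n l) w).
  apply: funext => w; rewrite /grid_approx mulr_suml; apply: eq_bigr => k _.
  rewrite mulr_sumr; apply: eq_bigr => l _.
  by rewrite indicI /= mulrACA.
rewrite expectR_sum => [|k]; last first.
  apply: bounded_mfun_sum => l; apply: bounded_mfunM.
    exact: bounded_mfun_cst.
  exact: bounded_mfun_indic.
apply: eq_bigr => k _; rewrite mulr_sumr expectR_sum => [|l]; last first.
  apply: bounded_mfunM; [exact: bounded_mfun_cst | exact: bounded_mfun_indic].
apply: eq_bigr => l _; rewrite expectRZ; last exact: bounded_mfun_indic.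
have mXk := measurable_grid_cell n k mX; have mYl := measurable_grid_cell n l mY.
by rewrite expectR_indic // XY fineM ?fin_num_measure // mulrACA.
Qed.

Lemma expectRM_indep01 (C1 C2 : set (set T)) (X Y : T -> R) :
  (forall E F, C1 E -> C2 F -> P (E `&` F) = (P E * P F)%E) ->
  (forall B, measurable B -> C1 (X @^-1` B)) ->
  (forall B, measurable B -> C2 (Y @^-1` B)) ->
  measurable_fun setT X -> measurable_fun setT Y ->
  (forall w, 0 <= X w <= 1) -> (forall w, 0 <= Y w <= 1) ->
  expectR P (fun w => X w * Y w) = expectR P X * expectR P Y.
Proof.
move=> C12 C1X C2Y mX mY X01 Y01.
apply/eqP; rewrite -subr_eq0; apply/eqP; apply: (@eq0_le_divS _ _ 2) => n.
have approxM : expectR P (fun w => grid_approx X n w * grid_approx Y n w) =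
    expectR P (grid_approx X n) * expectR P (grid_approx Y n).
  by apply: expectR_grid_approxM => // k l; apply: C12; [apply: C1X | apply: C2Y].
have /andP[EXYn_lo EXYn_hi] := expectR_grid_approxM_bounds n mX mY X01 Y01.
have [EXn_bounds EXXn] := expectR_grid_approx_bounds n mX X01.
have [EYn_bounds EYYn] := expectR_grid_approx_bounds n mY Y01.
have /andP[_ EX1] := expectR01 mX X01; have /andP[_ EY1] := expectR01 mY Y01.
have /andP[EXEYn_lo EXEYn_hi] := mulr_approx EXn_bounds EX1 EYn_bounds EY1 EXXn EYYn.
rewrite approxM in EXYn_lo EXYn_hi.
set e := 2 / n.+1%:R in EXYn_lo EXEYn_lo *.
by rewrite ler_norml; apply/andP; split; lra.
Qed.

End grid_approximation.

Lemma rescale01 (R : realFieldType) (T : Type) (Z : T -> R) (M : R) :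
  (forall w, `|Z w| <= M) -> exists c : R, forall w,
    0 <= (Z w + c) / (2 * c) <= 1 /\ Z w = 2 * c * ((Z w + c) / (2 * c)) + - c.
Proof.
move=> ZM; exists (`|M| + 1) => w.
have c0 : 0 < `|M| + 1 by rewrite ltr_pwDr.
split; last by rewrite mulrC divfK ?addrK // mulf_neq0 // gt_eqF.
have := le_trans (ZM w) (ler_norm M); rewrite ler_norml => /andP[Zlo Zhi].
rewrite divr_ge0 ?ler_pdivrMr ?mulr_gt0 //=; lra.
Qed.

Section independent_product.
Context d (T : measurableType d) (R : realType) (P : probability T R).
Variables (G1 G2 : set (set T)).
Hypotheses (G1I : setI_closed G1) (G2I : setI_closed G2)
  (G1m : G1 `<=` measurable) (G2m : G2 `<=` measurable)
  (G12 : forall E F, G1 E -> G2 F -> P (E `&` F) = (P E * P F)%E).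

Lemma expectRM_g_sigma_indep (X Y : T -> R) :
  @measurable_fun _ _ (g_sigma_algebraType G1) R setT X ->
  @measurable_fun _ _ (g_sigma_algebraType G2) R setT Y ->
  (exists M, forall w, `|X w| <= M) -> (exists M, forall w, `|Y w| <= M) ->
  expectR P (fun w => X w * Y w) = expectR P X * expectR P Y.
Proof.
move=> mX mY [MX XM] [MY YM].
have [cX X01] := rescale01 XM; have [cY Y01] := rescale01 YM.
set X' := fun w => (X w + cX) / (2 * cX); set Y' := fun w => (Y w + cY) / (2 * cY).
have mX' : @measurable_fun _ _ (g_sigma_algebraType G1) R setT X'.
  by apply: measurable_funM => //; apply: measurable_funD.
have mY' : @measurable_fun _ _ (g_sigma_algebraType G2) R setT Y'.
  by apply: measurable_funM => //; apply: measurable_funD.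
have bX' := bounded_mfun01 (g_sigma_measurable_fun G1m mX') (fun w => (X01 w).1).
have bY' := bounded_mfun01 (g_sigma_measurable_fun G2m mY') (fun w => (Y01 w).1).
have XE : X = (fun w => 2 * cX * X' w + - cX) by apply: funext => w; case: (X01 w).
have YE : Y = (fun w => 2 * cY * Y' w + - cY) by apply: funext => w; case: (Y01 w).
have bX : bounded_mfun X.
  rewrite XE; apply: bounded_mfunD; last exact: bounded_mfun_cst.
  exact: bounded_mfunM (bounded_mfun_cst _ _) bX'.
have X'Y' : expectR P (fun w => X' w * Y' w) = expectR P X' * expectR P Y'.
  apply: (expectRM_indep01 (g_sigma_indep G1I G2I G1m G2m G12)).
  - by move=> B mB; exact: g_sigma_preimage.
  - by move=> B mB; exact: g_sigma_preimage.
  - exact: g_sigma_measurable_fun G1m mX'.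
  - exact: g_sigma_measurable_fun G2m mY'.
  - by move=> w; case: (X01 w).
  - by move=> w; case: (Y01 w).
have XY' : expectR P (fun w => X w * Y' w) = expectR P X * expectR P Y'.
  by rewrite XE; apply: expectRM_affinel.
have Y'X : expectR P (fun w => Y' w * X w) = expectR P Y' * expectR P X.
  by rewrite mulrC -XY'; congr expectR; apply: funext => w; rewrite mulrC.
rewrite (_ : (fun w => X w * Y w) = (fun w => (2 * cY * Y' w + - cY) * X w)).
  by rewrite expectRM_affinel // -YE mulrC.
by apply: funext => w; rewrite mulrC {1}YE.
Qed.

End independent_product.

Section value_function.
Variables (R : realType) (S A : finType) (pi : S -> A -> R) (r : S -> A -> R)
  (gamma : R).
Hypotheses (pi_policy : is_policy pi) (gamma_ge0 : 0 <= gamma)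
  (gamma_lt1 : gamma < 1).

Definition policy_reward (x : S) : R := \sum_(a : A) pi x a * r x a.

Definition discounted_reward (q : S -> A -> S -> R) (s : S) (h : nat) : R :=
  gamma ^+ h * \sum_(x : S) state_dist pi q h s x * policy_reward x.

Definition reward_scale : R := \sum_(x : S) `|policy_reward x|.

Lemma valueE q s : value r gamma pi q s = limn (series (discounted_reward q s)).
Proof. by []. Qed.

Lemma state_dist_measurable d (T : measurableType d)
    (pp : T -> S -> A -> S -> R) :
  (forall x a y, measurable_fun setT (fun w => pp w x a y)) ->
  forall h s x, measurable_fun setT (fun w => state_dist pi (pp w) h s x).
Proof.
move=> mpp; elim=> [|h IH] s x /=; first exact: measurable_cst.
apply: measurable_sum => y; apply: measurable_funM; first exact: IH.
apply: measurable_sum => a; apply: measurable_funM; first exact: measurable_cst.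
exact: mpp.
Qed.

Section transition.
Variable q : S -> A -> S -> R.
Hypothesis q_trans : is_transition q.

Lemma state_dist_ge0 h s x : 0 <= state_dist pi q h s x.
Proof.
elim: h s x => [|h IH] s x /=; first by rewrite ler0n.
apply: sumr_ge0 => y _; apply: mulr_ge0 => //; apply: sumr_ge0 => a _.
by apply: mulr_ge0; [case: (pi_policy y) | case: (q_trans y a)].
Qed.

Lemma state_dist_sum1 h s : \sum_(x : S) state_dist pi q h s x = 1.
Proof.
elim: h s => [|h IH] s /=.
  by rewrite (bigD1 s) //= eqxx big1 ?addr0 // => x /negbTE ->.
rewrite exchange_big /= -[RHS](IH s); apply: eq_bigr => y _.
rewrite -mulr_sumr exchange_big /=.
have -> : \sum_(a : A) \sum_(x : S) pi y a * q y a x = 1.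
  case: (pi_policy y) => _ <-; apply: eq_bigr => a _.
  by rewrite -mulr_sumr; case: (q_trans y a) => _ ->; rewrite mulr1.
by rewrite mulr1.
Qed.

Lemma state_dist_le1 h s x : state_dist pi q h s x <= 1.
Proof.
rewrite -(state_dist_sum1 h s) (bigD1 x) //= lerDl.
by apply: sumr_ge0 => y _; apply: state_dist_ge0.
Qed.

Lemma discounted_reward_bound s h :
  `|discounted_reward q s h| <= geometric reward_scale gamma h.
Proof.
rewrite /discounted_reward /geometric /= normrM.
rewrite [`|gamma ^+ h|]ger0_norm ?exprn_ge0 // mulrC.
apply: ler_wpM2r; first by rewrite exprn_ge0.
apply: (le_trans (ler_norm_sum _ _ _)); apply: ler_sum => x _.
rewrite normrM ger0_norm ?state_dist_ge0 //; apply: ler_piMl => //.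
exact: state_dist_le1.
Qed.

Lemma is_cvg_normed_value_series s :
  cvgn [normed series (discounted_reward q s)].
Proof.
have gamma_norm : `|gamma| < 1 by rewrite ger0_norm.
apply: (@series_le_cvg _ _ (geometric reward_scale gamma)).
- by move=> n; exact: normr_ge0.
- by move=> n; rewrite /geometric /= mulr_ge0 ?sumr_ge0 ?exprn_ge0.
- exact: discounted_reward_bound.
- exact: is_cvg_geometric_series gamma_norm.
Qed.

Lemma value_bound s : `|value r gamma pi q s| <= reward_scale / (1 - gamma).
Proof.
have gamma_norm : `|gamma| < 1 by rewrite ger0_norm.
have normed_cvg := is_cvg_normed_value_series (s := s).
rewrite valueE; apply: (le_trans (lim_series_norm normed_cvg)).
rewrite -(cvg_lim _ (@cvg_geometric_series _ reward_scale _ gamma_norm)) //.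
apply: lim_series_le => //; first exact: is_cvg_geometric_series gamma_norm.
exact: discounted_reward_bound.
Qed.

End transition.

Lemma value_measurable d (T : measurableType d) (pp : T -> S -> A -> S -> R) :
  (forall w, is_transition (pp w)) ->
  (forall x a y, measurable_fun setT (fun w => pp w x a y)) ->
  forall s, measurable_fun setT (fun w => value r gamma pi (pp w) s).
Proof.
move=> pp_trans mpp s.
apply: (measurable_fun_cvg (h := fun m w => series (discounted_reward (pp w) s) m)).
  move=> m; apply: measurable_sum => h; apply: measurable_funM.
    exact: measurable_cst.
  apply: measurable_sum => x; apply: measurable_funM; last exact: measurable_cst.
  exact: state_dist_measurable.
by move=> w _; apply/normed_cvg/is_cvg_normed_value_series.
Qed.

End value_function.

Definition wvar (R : comRingType) (I : finType) (mu f : I -> R) : R :=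
  \sum_(j : I) mu j * f j ^+ 2 - (\sum_(j : I) mu j * f j) ^+ 2.

(* Var(v) - Var(b) = Var(v - b) + 2 Cov(b, v - b), the covariance written out. *)
Lemma wvarB (R : comRingType) (I : finType) (mu v b : I -> R) :
  \sum_(j : I) mu j = 1 ->
  wvar mu v - wvar mu b = wvar mu (fun j => v j - b j)
    + 2 * (\sum_(j : I) b j * (mu j * (v j - b j))
           - \sum_(i : I) \sum_(j : I) b i * (mu i * mu j * (v j - b j))).
Proof.
move=> mu_sum1; rewrite /wvar.
have sq : \sum_j mu j * v j ^+ 2 = \sum_j mu j * b j ^+ 2
    + 2 * \sum_j b j * (mu j * (v j - b j)) + \sum_j mu j * (v j - b j) ^+ 2.
  rewrite mulr_sumr -!big_split; apply: eq_bigr => j _ /=.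
  by move: (mu j) (v j) (b j) => x y z; ring.
have lin : \sum_j mu j * v j = \sum_j mu j * b j + \sum_j mu j * (v j - b j).
  rewrite -big_split; apply: eq_bigr => j _ /=.
  by move: (mu j) (v j) (b j) => x y z; ring.
have cross : \sum_i \sum_j b i * (mu i * mu j * (v j - b j)) =
    (\sum_j mu j * b j) * (\sum_j mu j * (v j - b j)).
  rewrite mulr_suml; apply: eq_bigr => i _; rewrite mulr_sumr.
  apply: eq_bigr => j _.
  by move: (mu i) (mu j) (v j) (b j) (b i) => x1 x2 x3 x4 x5; ring.
rewrite sq lin cross.
move: (\sum_j mu j * b j ^+ 2) (\sum_j b j * (mu j * (v j - b j)))
  (\sum_j mu j * (v j - b j) ^+ 2) (\sum_j mu j * b j)
  (\sum_j mu j * (v j - b j)) => x1 x2 x3 x4 x5.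
ring.
Qed.

Lemma wvar_delta (R : comRingType) (I : finType) (i : I) (f : I -> R) :
  wvar (fun j => (j == i)%:R) f = 0.
Proof.
have delta g : \sum_j (j == i)%:R * g j = g i.
  rewrite (bigD1 i) //= big1 => [|j /negbTE ->]; last by rewrite mul0r.
  by rewrite eqxx mul1r addr0.
by rewrite /wvar !delta subrr.
Qed.

Section next_state.
Variables (R : realType) (S A : finType) (pi : S -> A -> R) (s : S).

Definition next_dist (q : S -> A -> S -> R) (j : S) : R :=
  \sum_(a : A) pi s a * q s a j.

Lemma next_meanE q f : next_mean pi q s f = \sum_(j : S) next_dist q j * f j.
Proof.
rewrite /next_mean exchange_big /=; apply: eq_bigr => j _.
by rewrite /next_dist mulr_suml.
Qed.

Lemma next_varE q f : \sum_(j : S) next_dist q j = 1 ->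
  next_var pi q s f = wvar (next_dist q) f.
Proof.
move=> sum1; rewrite /next_var /wvar exchange_big /=.
set m := next_mean pi q s f.
have -> : \sum_j \sum_a pi s a * q s a j * (f j - m) ^+ 2 =
    \sum_j (next_dist q j * f j ^+ 2 - 2 * m * (next_dist q j * f j)
           + m ^+ 2 * next_dist q j).
  apply: eq_bigr => j _; rewrite /next_dist -mulr_suml.
  by move: (\sum_a pi s a * q s a j) (f j) => x y; ring.
rewrite !big_split /= sumrN -!mulr_sumr sum1 /m next_meanE.
by move: (\sum_j next_dist q j * f j ^+ 2) (\sum_j next_dist q j * f j) => x y; ring.
Qed.

Section transition.
Variable q : S -> A -> S -> R.
Hypotheses (pi_policy : is_policy pi) (q_trans : is_transition q).

Lemma next_dist_ge0 j : 0 <= next_dist q j.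
Proof.
apply: sumr_ge0 => a _.
by apply: mulr_ge0; [case: (pi_policy s) | case: (q_trans s a)].
Qed.

Lemma next_dist_sum1 : \sum_(j : S) next_dist q j = 1.
Proof.
rewrite /next_dist exchange_big /=; case: (pi_policy s) => _ <-.
by apply: eq_bigr => a _; rewrite -mulr_sumr; case: (q_trans s a) => _ ->; rewrite mulr1.
Qed.

Lemma next_dist_le1 j : next_dist q j <= 1.
Proof.
rewrite -next_dist_sum1 (bigD1 j) //= lerDl.
by apply: sumr_ge0 => i _; exact: next_dist_ge0.
Qed.

Lemma next_var_ge0 f : 0 <= next_var pi q s f.
Proof.
apply: sumr_ge0 => a _; apply: sumr_ge0 => y _.
rewrite mulr_ge0 ?sqr_ge0 // mulr_ge0 //; first by case: (pi_policy s).
by case: (q_trans s a).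
Qed.

End transition.

End next_state.

Lemma sumr_neq0_exists (R : numDomainType) (I : finType) (F : I -> R) :
  \sum_(i : I) F i != 0 -> exists i, F i != 0.
Proof.
apply: contraNP => /forallNP F0.
by rewrite big1 // => i _; apply/eqP/negbNE/negP/F0.
Qed.

Section acyclic.
Variables (R : realType) (S A : finType) (pi : S -> A -> R)
  (q : S -> A -> S -> R) (terminal : pred S) (rho : S -> nat).
Hypotheses (q_trans : is_transition q)
  (q_acyclic : forall s a s', (terminal s -> q s a s = 1) /\
     (~~ terminal s -> q s a s' != 0 -> (rho s < rho s')%N)).

Lemma terminal_row x a y : terminal x -> y != x -> q x a y = 0.
Proof.
move=> tx yx; have [q_ge0 q_sum1] := q_trans x a.
have qxx : q x a x = 1 by case: (q_acyclic x a x) => + _; apply.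
have off_x : \sum_(i | i != x) q x a i = 0.
  by move: q_sum1; rewrite (bigD1 x) //= qxx => ?; lra.
exact: (psumr_eq0P (fun i _ => q_ge0 i) off_x yx).
Qed.

Lemma state_dist_rho h j y : state_dist pi q h j y != 0 -> (rho j <= rho y)%N.
Proof.
elim: h y => [|h IH] y /=.
  by case: (eqVneq y j) => [->|]; rewrite ?leqnn // eqxx.
move=> /sumr_neq0_exists [z]; rewrite mulf_eq0 negb_or => /andP[hz].
move=> /sumr_neq0_exists [a]; rewrite mulf_eq0 negb_or => /andP[_ qzy].
apply: (leq_trans (IH _ hz)).
have [tz|ntz] := boolP (terminal z); last first.
  by apply: ltnW; case: (q_acyclic z a y) => _; apply.
by case: (eqVneq y z) => [->//|yz]; rewrite terminal_row ?eqxx in qzy.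
Qed.

(* The chain started at [j] never visits [s], so row [s] is irrelevant. *)
Lemma state_dist_off_row (q' : S -> A -> S -> R) s j : (rho s < rho j)%N ->
  (forall x, x != s -> q' x = q x) ->
  forall h x, state_dist pi q' h j x = state_dist pi q h j x.
Proof.
move=> sj q'q; elim=> [|h IH] x //=.
apply: eq_bigr => y _; rewrite IH.
have [->|ys] := eqVneq y s; last by rewrite q'q.
suff -> : state_dist pi q h j s = 0 by rewrite !mul0r.
apply/eqP; apply: contraTT sj => /state_dist_rho.
by rewrite -leqNgt.
Qed.

Lemma value_off_row (r : S -> A -> R) gamma (q' : S -> A -> S -> R) s j :
  (rho s < rho j)%N -> (forall x, x != s -> q' x = q x) ->
  value r gamma pi q' j = value r gamma pi q j.
Proof.
move=> sj q'q; congr (lim (_ @ \oo)); apply: funext => n.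
apply: eq_bigr => h _; congr (_ * _); apply: eq_bigr => x _.
by rewrite (state_dist_off_row sj q'q).
Qed.

Lemma next_dist_rho s j : ~~ terminal s -> next_dist pi s q j != 0 ->
  (rho s < rho j)%N.
Proof.
move=> ts /sumr_neq0_exists [a]; rewrite mulf_eq0 negb_or => /andP[_].
by case: (q_acyclic s a j) => _; apply.
Qed.

Lemma next_var_terminal s f : is_policy pi -> terminal s -> next_var pi q s f = 0.
Proof.
move=> pi_policy ts; rewrite next_varE ?next_dist_sum1 //.
rewrite (_ : next_dist pi s q = fun j => (j == s)%:R) ?wvar_delta //.
apply: funext => j; have [->|js] := eqVneq j s.
  rewrite /next_dist -[RHS](proj2 (pi_policy s)); apply: eq_bigr => a _.
  by case: (q_acyclic s a s) => -> //; rewrite mulr1.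
by rewrite /next_dist big1 // => a _; rewrite terminal_row ?mulr0.
Qed.

End acyclic.

(* Row [s] replaced by an absorbing self-loop. Applied to [p w] it depends only
   on the other rows, and by acyclicity it has the same values as [p w] at
   every state above [s]. *)
Definition absorb_at (R : realType) (S A : finType) (s : S)
    (q : S -> A -> S -> R) : S -> A -> S -> R :=
  fun x a y => if x == s then (y == s)%:R else q x a y.

Lemma is_transition_absorb_at (R : realType) (S A : finType) (s : S)
    (q : S -> A -> S -> R) :
  is_transition q -> is_transition (absorb_at s q).
Proof.
move=> q_trans x a; rewrite /absorb_at; case: eqP => _; last exact: q_trans.
split=> [y|]; first by rewrite ler0n.
by rewrite (bigD1 s) //= eqxx big1 ?addr0 // => y /negbTE ->.
Qed.

Section transition_rows.
Context d (Omega : measurableType d) (R : realType) (S A : finType)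
  (P : probability Omega R) (p : Omega -> S -> A -> S -> R).
Hypothesis p_meas : forall x a y, measurable_fun setT (fun w => p w x a y).
Implicit Types (B : S -> A -> S -> set R) (I J : pred S).

Definition transition_event B : set Omega :=
  [set w | forall x a y, B x a y (p w x a y)].

Definition restrict_rows I B : S -> A -> S -> set R :=
  fun x a y => if I x then B x a y else setT.

(* Generators of the sigma-algebra of the rows [p w x] with [x] in [I]. *)
Definition rows_events I : set (set Omega) :=
  [set E | exists2 B, (forall x a y, measurable (B x a y)) &
                      E = transition_event (restrict_rows I B)].

Lemma transition_eventE B : transition_event B =
  \bigcap_(x in [set: S]) [set w | forall a y, B x a y (p w x a y)].
Proof.
rewrite /transition_event.
by apply/seteqP; split => w /= Bw => [x _ a y | x a y]; [exact: Bw | exact: Bw x I a y].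
Qed.

Lemma transition_eventI B B' : transition_event B `&` transition_event B' =
  transition_event (fun x a y => B x a y `&` B' x a y).
Proof.
apply/seteqP; split => w /=; first by move=> [Bw B'w] x a y; split.
by move=> BB'w; split => x a y; case: (BB'w x a y).
Qed.

Lemma transition_event_measurable B : (forall x a y, measurable (B x a y)) ->
  measurable (transition_event B).
Proof.
move=> mB; have -> : transition_event B = \bigcap_(i in [set: (S * A * S)%type])
    ((fun w => p w i.1.1 i.1.2 i.2) @^-1` B i.1.1 i.1.2 i.2).
  apply/seteqP; split => w /=; first by move=> Bw [[x a] y] _; exact: Bw.
  by move=> Bw x a y; exact: (Bw (x, a, y)).
apply: fin_bigcap_measurable; first exact: finite_finset.
by move=> [[x a] y] _; rewrite -[X in measurable X]setTI; exact: p_meas.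
Qed.

Lemma measurable_restrict_rows I B : (forall x a y, measurable (B x a y)) ->
  forall x a y, measurable (restrict_rows I B x a y).
Proof. by move=> mB x a y; rewrite /restrict_rows; case: (I x). Qed.

Lemma rows_events_measurable I : rows_events I `<=` measurable.
Proof.
move=> _ [B mB ->]; apply: transition_event_measurable.
exact: measurable_restrict_rows.
Qed.

Lemma rows_events_setI I : setI_closed (rows_events I).
Proof.
move=> _ _ [B mB ->] [B' mB' ->].
exists (fun x a y => B x a y `&` B' x a y) => [x a y|]; first exact: measurableI.
rewrite transition_eventI; congr transition_event.
apply: funext => x; apply: funext => a; apply: funext => y.
by rewrite /restrict_rows; case: (I x); rewrite ?setIT.
Qed.

Hypothesis p_indep : independent_transitions P p.

Lemma rows_events_indep I J : (forall x, I x -> ~~ J x) ->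
  forall E F, rows_events I E -> rows_events J F -> P (E `&` F) = (P E * P F)%E.
Proof.
move=> IJ _ _ [B mB ->] [B' mB' ->].
have mI := measurable_restrict_rows I mB; have mJ := measurable_restrict_rows J mB'.
have mIJ x a y := measurableI _ _ (mI x a y) (mJ x a y).
rewrite transition_eventI !transition_eventE (p_indep mIJ) !p_indep // -big_split /=.
apply: eq_bigr => x _; rewrite /restrict_rows.
have rowT : [set w | forall (a : A) (y : S), [set: R] (p w x a y)] = setT.
  by apply/seteqP; split.
have [Ix|nIx] := boolP (I x); have [Jx|nJx] := boolP (J x).
- by move: (IJ x Ix); rewrite Jx.
- rewrite rowT probability_setT mule1; congr (P _).
  by apply/seteqP; split => w /= Bw a y; [case: (Bw a y) | split; [exact: Bw |]].
- rewrite rowT probability_setT mul1e; congr (P _).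
  by apply/seteqP; split => w /= Bw a y; [case: (Bw a y) | split; [| exact: Bw]].
- rewrite rowT probability_setT mule1 -(probability_setT P); congr (P _).
  by apply/seteqP; split.
Qed.

Lemma measurable_row_entry I x a y : I x ->
  @measurable_fun _ _ (g_sigma_algebraType (rows_events I)) R setT
    (fun w => p w x a y).
Proof.
move=> Ix _ C mC; rewrite setTI; apply: sub_sigma_algebra.
exists (fun x' a' y' => if (x', a', y') == (x, a, y) then C else setT).
  by move=> x' a' y'; case: ifP.
apply/seteqP; split => w /=.
  move=> Cw x' a' y'; rewrite /restrict_rows; case: (I x') => //.
  by case: eqP => // -[-> -> ->].
by move=> /(_ x a y); rewrite /restrict_rows Ix eqxx.
Qed.

Lemma measurable_absorb_at s x a y :
  @measurable_fun _ _ (g_sigma_algebraType (rows_events (predC1 s))) R setT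
    (fun w => absorb_at s (p w) x a y).
Proof.
rewrite /absorb_at; case: eqP => [_|/eqP xs]; first exact: measurable_cst.
exact: measurable_row_entry.
Qed.

End transition_rows.

Section posterior_variance.
Context d (Omega : measurableType d) (R : realType) (S A : finType)
  (P : probability Omega R) (p : Omega -> S -> A -> S -> R) (r : S -> A -> R)
  (gamma : R) (pi : S -> A -> R) (s : S).
Hypotheses (gamma_ge0 : 0 <= gamma) (gamma_lt1 : gamma < 1)
  (p_trans : forall w, is_transition (p w))
  (p_meas : forall x a y, measurable_fun setT (fun w => p w x a y))
  (pi_policy : is_policy pi).

Local Notation V j := (fun w => value r gamma pi (p w) j).
Local Notation Vbar := (mean_value P p r gamma pi).
Local Notation Q j := (fun w => next_dist pi s (p w) j).
Local Notation M := (fun w => next_mean pi (p w) s Vbar).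

Lemma bounded_mfun_transition x a y : bounded_mfun (fun w => p w x a y).
Proof.
split=> //; exists 1 => w; have [p_ge0 p_sum1] := p_trans w x a.
rewrite ger0_norm // -p_sum1 (bigD1 y) //= lerDl; exact: sumr_ge0.
Qed.

Lemma bounded_mfun_value j : bounded_mfun (V j).
Proof.
split; first exact: value_measurable.
by exists (reward_scale pi r / (1 - gamma)) => w; exact: value_bound.
Qed.

Lemma bounded_mfun_next_dist j : bounded_mfun (Q j).
Proof.
split; last first.
  exists 1 => w; rewrite ger0_norm ?next_dist_ge0 //; exact: next_dist_le1.
apply: measurable_sum => a; apply: measurable_funM => //; exact: measurable_cst.
Qed.

Lemma bounded_mfun_next_var (F : S -> Omega -> R) :
  (forall j, bounded_mfun (F j)) ->
  bounded_mfun (fun w => next_var pi (p w) s (fun j => F j w)).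
Proof.
move=> bF; under eq_fun do rewrite next_varE ?next_dist_sum1 //.
apply: bounded_mfunB; first by apply: bounded_mfun_sum => j;
  apply: bounded_mfunM; [exact: bounded_mfun_next_dist | exact: bounded_mfun_sqr].
apply: bounded_mfun_sqr; apply: bounded_mfun_sum => j.
by apply: bounded_mfunM; [exact: bounded_mfun_next_dist | exact: bF].
Qed.

Lemma bounded_mfun_next_mean : bounded_mfun M.
Proof.
under eq_fun do rewrite next_meanE.
apply: bounded_mfun_sum => j; apply: bounded_mfunM.
  exact: bounded_mfun_next_dist.
exact: bounded_mfun_cst.
Qed.

Lemma expectR_next_dist j :
  expectR P (Q j) = next_dist pi s (mean_transition P p) j.
Proof.
rewrite /next_dist expectR_sum => [|a]; last first.
  exact: bounded_mfunM (bounded_mfun_cst _ _) (bounded_mfun_transition _ _ _).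
apply: eq_bigr => a _; rewrite (expectRZ P _ (f := fun w => p w s a j)) //.
exact: bounded_mfun_transition.
Qed.

Lemma is_transition_mean_transition : is_transition (mean_transition P p).
Proof.
move=> x a; split=> [y|]; first by apply: expectR_ge0 => w; case: (p_trans w x a).
rewrite -[RHS](expectR_cst P) -expectR_sum => [|y]; last exact: bounded_mfun_transition.
by congr expectR; apply: funext => w; case: (p_trans w x a).
Qed.

(* Law of total variance for the mixture [mean_transition P p] of the [p w]. *)
Lemma next_var_mean_transition :
  next_var pi (mean_transition P p) s Vbar =
  (expectR P (fun w => M w * M w) - expectR P M ^+ 2) +
  expectR P (fun w => next_var pi (p w) s Vbar).
Proof.
have bQV j k : bounded_mfun (fun w => next_dist pi s (p w) j * k).
  exact: bounded_mfunM (bounded_mfun_next_dist j) (bounded_mfun_cst _ _).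
have EQV k : expectR P (fun w => \sum_j next_dist pi s (p w) j * k j) =
    \sum_j next_dist pi s (mean_transition P p) j * k j.
  rewrite expectR_sum //; apply: eq_bigr => j _; under eq_fun do rewrite mulrC.
  rewrite (expectRZ P _ (f := fun w => next_dist pi s (p w) j)).
    by rewrite expectR_next_dist mulrC.
  exact: bounded_mfun_next_dist.
have EM : expectR P M = \sum_j next_dist pi s (mean_transition P p) j * Vbar j.
  by under eq_fun do rewrite next_meanE; rewrite EQV.
have ENb : expectR P (fun w => next_var pi (p w) s Vbar) =
    \sum_j next_dist pi s (mean_transition P p) j * Vbar j ^+ 2 -
    expectR P (fun w => M w * M w).
  have -> : (fun w => next_var pi (p w) s Vbar) = (fun w =>
      \sum_j next_dist pi s (p w) j * Vbar j ^+ 2 - M w * M w).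
    apply: funext => w.
    by rewrite next_varE ?next_dist_sum1 // /wvar next_meanE expr2.
  rewrite expectRB ?EQV //; first exact: bounded_mfun_sum.
  exact: bounded_mfunM bounded_mfun_next_mean bounded_mfun_next_mean.
rewrite next_varE ?next_dist_sum1 //; last exact: is_transition_mean_transition.
by rewrite /wvar -EM ENb; lra.
Qed.

Variables (terminal : pred S) (rho : S -> nat).
Hypotheses (p_indep : independent_transitions P p)
  (p_acyclic : forall w x a y, (terminal x -> p w x a x = 1) /\
     (~~ terminal x -> p w x a y != 0 -> (rho x < rho y)%N)).

Local Notation row_s := (g_sigma_algebraType (rows_events p (pred1 s))).
Local Notation off_row_s := (g_sigma_algebraType (rows_events p (predC1 s))).

Lemma measurable_next_dist j :
  @measurable_fun _ _ row_s R setT (Q j).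
Proof.
apply: measurable_sum => a; apply: measurable_funM; first exact: measurable_cst.
by apply: measurable_row_entry; rewrite /= eqxx.
Qed.

(* Where [X] is nonzero, acyclicity makes [V j] independent of row [s], which
   determines [X]; and (A1) makes row [s] independent of the other rows. *)
Lemma expectR_mul_value_dev (X : Omega -> R) j :
  @measurable_fun _ _ row_s R setT X -> (exists C, forall w, `|X w| <= C) ->
  (forall w, X w != 0 -> (rho s < rho j)%N) ->
  expectR P (fun w => X w * (V j w - Vbar j)) = 0.
Proof.
move=> mX XC Xj; have [sj|js] := ltnP (rho s) (rho j); last first.
  rewrite -[RHS](expectR_cst P); congr expectR; apply: funext => w.
  by have [->|/Xj] := eqVneq (X w) 0; [rewrite mul0r | rewrite ltnNge js].
have row_s_meas : rows_events p (pred1 s) `<=` measurable.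
  exact: rows_events_measurable.
have off_row_s_meas : rows_events p (predC1 s) `<=` measurable.
  exact: rows_events_measurable.
have bX : bounded_mfun X by split; [exact: g_sigma_measurable_fun mX | exact: XC].
have absorb_trans w := is_transition_absorb_at s (p_trans w).
have indep : expectR P (fun w => X w * V j w) = expectR P X * expectR P (V j).
  have VE w : value r gamma pi (p w) j = value r gamma pi (absorb_at s (p w)) j.
    symmetry; apply: (value_off_row pi (p_trans w) (p_acyclic w) r gamma sj).
    by move=> x xs; rewrite /absorb_at; apply: funext => a; rewrite (negbTE xs).
  rewrite (funext VE); under eq_fun do rewrite VE.
  apply: (expectRM_g_sigma_indep (rows_events_setI (I := pred1 s))
    (rows_events_setI (I := predC1 s)) row_s_meas off_row_s_meas
    (rows_events_indep p_indep (I := pred1 s) (J := predC1 s) _)) => //.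
  - by move=> x /eqP ->; rewrite /= eqxx.
  - by apply: value_measurable => //; exact: measurable_absorb_at.
  - exists (reward_scale pi r / (1 - gamma)) => w.
    by apply: value_bound => //; exact: absorb_trans.
have bXV := bounded_mfunM bX (bounded_mfun_value j).
have bVX := bounded_mfunM (bounded_mfun_cst _ (Vbar j)) bX.
under eq_fun do rewrite mulrBr [X _ * Vbar j]mulrC.
by rewrite expectRB // expectRZ // indep mulrC subrr.
Qed.

Lemma bounded_mfun_value_dev j : bounded_mfun (fun w => V j w - Vbar j).
Proof. exact: bounded_mfunB (bounded_mfun_value j) (bounded_mfun_cst _ _). Qed.

Lemma bounded_mfun_value_devM (X : Omega -> R) j :
  bounded_mfun X -> bounded_mfun (fun w => X w * (V j w - Vbar j)).
Proof. by move=> bX; exact: bounded_mfunM bX (bounded_mfun_value_dev j). Qed.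

Local Notation cross := (fun w =>
  \sum_j Vbar j * (Q j w * (V j w - Vbar j)) -
  \sum_i \sum_j Vbar i * (Q i w * Q j w * (V j w - Vbar j))).

Lemma bounded_mfun_cross : bounded_mfun cross.
Proof.
have bQ := bounded_mfun_next_dist.
apply: bounded_mfunB; apply: bounded_mfun_sum => i; last apply: bounded_mfun_sum => j.
  exact: bounded_mfunM (bounded_mfun_cst _ _) (bounded_mfun_value_devM _ (bQ i)).
apply: bounded_mfunM (bounded_mfun_cst _ _) (bounded_mfun_value_devM _ _).
exact: bounded_mfunM (bQ i) (bQ j).
Qed.

Lemma expectR_cross : ~~ terminal s -> expectR P cross = 0.
Proof.
move=> nts; have bQ := bounded_mfun_next_dist.
have bQQ i j := bounded_mfunM (bQ i) (bQ j).
have bQD i j := bounded_mfunM (bounded_mfun_cst _ (Vbar i))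
  (bounded_mfun_value_devM j (bQ i)).
have bQQD i j := bounded_mfunM (bounded_mfun_cst _ (Vbar i))
  (bounded_mfun_value_devM j (bQQ i j)).
rewrite expectRB; first last.
- by apply: bounded_mfun_sum => i; exact: bounded_mfun_sum.
- by apply: bounded_mfun_sum => j; exact: bQD.
rewrite expectR_sum // big1 => [|j _]; last first.
  rewrite expectRZ; last exact: bounded_mfun_value_devM.
  rewrite expectR_mul_value_dev ?mulr0 //; first exact: measurable_next_dist.
  - by case: (bQ j).
  - by move=> w; exact: next_dist_rho.
rewrite expectR_sum => [|i]; last exact: bounded_mfun_sum.
rewrite big1 ?subrr // => i _; rewrite expectR_sum // big1 // => j _.
rewrite expectRZ; last exact: bounded_mfun_value_devM.
rewrite (expectR_mul_value_dev (X := fun w => Q i w * Q j w)) ?mulr0 //.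
- by apply: measurable_funM; exact: measurable_next_dist.
- by case: (bQQ i j).
- by move=> w; rewrite mulf_eq0 negb_or => /andP[_]; exact: next_dist_rho.
Qed.

Lemma expectR_next_var_le :
  expectR P (fun w => next_var pi (p w) s Vbar) <=
  expectR P (fun w => next_var pi (p w) s (value r gamma pi (p w))).
Proof.
have bNbar := bounded_mfun_next_var (fun j => bounded_mfun_cst _ (Vbar j)).
have bN := bounded_mfun_next_var bounded_mfun_value.
have [ts|nts] := boolP (terminal s).
  apply: expectR_le => // w.
  by rewrite !(next_var_terminal (p_trans w) (p_acyclic w)).
have bND := bounded_mfun_next_var bounded_mfun_value_dev.
have b2cross := bounded_mfunM (bounded_mfun_cst _ 2) bounded_mfun_cross.
rewrite -subr_ge0 -expectRB //.
have -> : (fun w => next_var pi (p w) s (value r gamma pi (p w)) -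
    next_var pi (p w) s Vbar) = (fun w =>
    next_var pi (p w) s (fun j => V j w - Vbar j) + 2 * cross w).
  apply: funext => w; rewrite !next_varE ?next_dist_sum1 //.
  exact: wvarB (next_dist_sum1 s pi_policy (p_trans w)).
rewrite expectRD // expectRZ; last exact: bounded_mfun_cross.
rewrite expectR_cross // mulr0 addr0.
by apply: expectR_ge0 => w; exact: next_var_ge0.
Qed.

End posterior_variance.

Unset Implicit Arguments.

Theorem theorem2 (d : measure_display) (Omega : measurableType d)
  (R : realType) (S A : finType) (P : probability Omega R)
  (p : Omega -> S -> A -> S -> R) (r : S -> A -> R) (gamma : R)
  (pi : S -> A -> R) (s : S) :
  0 <= gamma -> gamma < 1 ->
  (forall w, is_transition (p w)) ->
  (forall s0 a s', measurable_fun setT (fun w => p w s0 a s')) ->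
  independent_transitions P p ->
  acyclic_mdp p ->
  is_policy pi ->
  let Vbar := mean_value P p r gamma pi in
  let pbar := mean_transition P p in
  let u := ((next_var pi pbar s Vbar)%:E
            - 'E_P[fun w => next_var pi (p w) s (value r gamma pi (p w))])%E in
  let w_ := ('V_P[fun w => (\sum_(a : A) \sum_(s' : S) pi s a * p w s a s' * Vbar s')%R])%E in
  let g := ('E_P[fun w => (next_var pi (p w) s (value r gamma pi (p w))
                         - next_var pi (p w) s Vbar)%R])%E in
  (u = w_ - g)%E /\ (0 <= g)%E /\ (u <= w_)%E.
Proof.
move=> gamma_ge0 gamma_lt1 p_trans p_meas p_indep [terminal [rho p_acyclic]]
  pi_policy Vbar pbar u w_ g.
set N := fun w => next_var pi (p w) s (value r gamma pi (p w)).
set Nbar := fun w => next_var pi (p w) s Vbar.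
have bN : bounded_mfun N.
  by apply: bounded_mfun_next_var => // j; exact: bounded_mfun_value.
have bNbar : bounded_mfun Nbar.
  by apply: bounded_mfun_next_var => // j; exact: bounded_mfun_cst.
have u_E : u = (next_var pi pbar s Vbar - expectR P N)%:E.
  by rewrite /u expectRE.
have g_E : g = (expectR P N - expectR P Nbar)%:E.
  by rewrite /g expectRE ?expectRB //; exact: bounded_mfunB.
set M := fun w => next_mean pi (p w) s Vbar.
have w_E : w_ = (expectR P (fun w => M w * M w) - expectR P M ^+ 2)%:E.
  by rewrite /w_ (varianceRE P (f := M)) //; exact: bounded_mfun_next_mean.
have total : next_var pi pbar s Vbar =
    expectR P (fun w => M w * M w) - expectR P M ^+ 2 + expectR P Nbar.
  exact: next_var_mean_transition.
have le : expectR P Nbar <= expectR P N by exact: expectR_next_var_le p_acyclic.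
rewrite w_E u_E g_E total; split; last split.
- by rewrite -EFinB; congr EFin; lra.
- by rewrite lee_fin subr_ge0.
- by rewrite lee_fin; lra.
Qed.
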